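(* If $L$ is a regular language, then ${\rm bdr}(L)$ is context-free.
   Context: For a word $w=a_1a_2\cdots a_n$, ${\rm odd}(w)=a_1a_3a_5\cdots$ (letters at odd positions) and ${\rm even}(w)=a_2a_4\cdots$ (letters at even positions). $x^R$ denotes the reversal of $x$. ${\rm bdr}(w)={\rm odd}(w)\,{\rm even}(w)^R$, and ${\rm bdr}(L)=\{{\rm bdr}(w):w\in L\}$. *)

From mathcomp Require Import all_boot.
Unset Printing Implicit Defensive.

Definition lang (A : Type) := seq A -> Prop.

(* odd w = letters at odd positions 1,3,5,... (1-indexed);
   even w = letters at even positions 2,4,... *)
Fixpoint oddw {A : Type} (w : seq A) : seq A :=
  match w with [::] => [::] | a :: w' => a :: evenw w' end
with evenw {A : Type} (w : seq A) : seq A :=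
  match w with [::] => [::] | _ :: w' => oddw w' end.

Definition bdr {A : Type} (w : seq A) : seq A := oddw w ++ rev (evenw w).

Definition bdr_lang {A : Type} (L : lang A) : lang A :=
  fun v => exists w, L w /\ v = bdr w.

Record dfa (A : finType) := DFA {
  dfa_state : finType;
  dfa_s : dfa_state;
  dfa_trans : dfa_state -> A -> dfa_state;
  dfa_fin : pred dfa_state }.

Definition dfa_accept (A : finType) (M : dfa A) (w : seq A) : bool :=
  @dfa_fin A M (foldl (@dfa_trans A M) (@dfa_s A M) w).

Definition regular (A : finType) (L : lang A) : Prop :=
  exists M : dfa A, forall w, L w <-> dfa_accept A M w.

Record cfg (A : finType) := CFG {
  cfg_nt : finType;
  cfg_start : cfg_nt;
  cfg_rules : seq (cfg_nt * seq (cfg_nt + A)) }.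

Definition cfg_step (A : finType) (G : cfg A) (u v : seq (cfg_nt A G + A)) : Prop :=
  exists (x y : seq (cfg_nt A G + A)) (X : cfg_nt A G) (rhs : seq (cfg_nt A G + A)),
    (X, rhs) \in cfg_rules A G /\ u = x ++ inl X :: y /\ v = x ++ rhs ++ y.

Inductive cfg_derives (A : finType) (G : cfg A) :
    seq (cfg_nt A G + A) -> seq (cfg_nt A G + A) -> Prop :=
  | cfg_derives_refl u : cfg_derives A G u u
  | cfg_derives_step u v w : cfg_step A G u v -> cfg_derives A G v w -> cfg_derives A G u w.

Definition cfg_lang (A : finType) (G : cfg A) : lang A :=
  fun w => cfg_derives A G [:: inl (cfg_start A G)] (map inr w).

Definition context_free (A : finType) (L : lang A) : Prop :=
  exists G : cfg A, forall w, L w <-> cfg_lang A G w.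

From mathcomp Require Import all_boot.
From mathcomp Require Import zify.

(* The key identity is
   bdr (a :: b :: u) = a :: bdr u ++ [:: b]: the border word is produced
   from the outside in, two letters of w at a time.  The grammar therefore
   uses the states of M as nonterminals, start symbol the initial state, and
     p -> a (d (d p a) b) b   for all a, b,
     p -> a                   when d p a is accepting,
     p -> eps                 when p is accepting.  Completeness: every sentential form derived
   from p is either  odd u . (d* p u) . rev (even u)  with |u| even, or the
   terminal word bdr u for some u leading from p to an accepting state; this
   invariant is preserved by each derivation step. *)

Lemma oddw_evenw_cat {T : Type} (u v : seq T) :
  oddw (u ++ v) = oddw u ++ (if odd (size u) then evenw v else oddw v)
  /\ evenw (u ++ v) = evenw u ++ (if odd (size u) then oddw v else evenw v).
Proof.
elim: u => [|a u [IHo IHe]] //=.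
by rewrite IHo IHe; case: (odd (size u)).
Qed.

Lemma bdr_cons2 {T : Type} (a b : T) (u : seq T) :
  bdr [:: a, b & u] = a :: bdr u ++ [:: b].
Proof. by rewrite /bdr /= rev_cons -cats1 catA. Qed.

Lemma terminal_no_nt {T U : eqType} {r : seq U} {x y : seq (T + U)} {X : T} :
  map inr r <> x ++ inl X :: y.
Proof.
move=> E; have : inl X \in map (@inr T U) r by rewrite E mem_cat in_cons eqxx orbT.
by case/mapP.
Qed.

Lemma single_nt_decomp {T U : eqType} (o r : seq U) (Q X : T) (x y : seq (T + U)) :
  map inr o ++ inl Q :: map inr r = x ++ inl X :: y ->
  [/\ x = map inr o, X = Q & y = map inr r].
Proof.
elim: o x => [|c o IH] [|e x] //=.
- by case=> -> <-.
- by case=> _ /terminal_no_nt.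
- by case=> <- /IH [-> -> ->].
Qed.

Section Derivations.
Variables (A : finType) (G : cfg A).
Local Notation sym := (cfg_nt A G + A)%type.

Lemma derives_rule (X : cfg_nt A G) (rhs : seq sym) :
  (X, rhs) \in cfg_rules A G -> cfg_derives A G [:: inl X] rhs.
Proof.
move=> Hr; apply: (cfg_derives_step _ _ _ rhs); last exact: cfg_derives_refl.
by exists [::], [::], X, rhs; rewrite cats0.
Qed.

Lemma derives_trans (u v w : seq sym) :
  cfg_derives A G u v -> cfg_derives A G v w -> cfg_derives A G u w.
Proof. by elim=> // s s' t Hst _ IH /IH; apply: cfg_derives_step. Qed.

Lemma derives_ctx (x y u v : seq sym) :
  cfg_derives A G u v -> cfg_derives A G (x ++ u ++ y) (x ++ v ++ y).
Proof.
elim=> [u'|u1 v1 w1 [x' [y' [X [rhs [Hr [-> ->]]]]]] _ IH].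
  exact: cfg_derives_refl.
apply: cfg_derives_step IH.
by exists (x ++ x'), (y' ++ y), X, rhs; rewrite -!catA.
Qed.

Lemma derives_inv (P : seq sym -> Prop) (u v : seq sym) :
  (forall s s', P s -> cfg_step A G s s' -> P s') ->
  cfg_derives A G u v -> P u -> P v.
Proof. by move=> Hstep; elim=> // s s' t Hst _ IH /Hstep/(_ Hst). Qed.

End Derivations.

Arguments derives_rule {A G X rhs}.
Arguments derives_trans {A G u v w}.
Arguments derives_ctx {A G} x y {u v}.
Arguments derives_inv {A G} P {u v}.

Section BorderGrammar.
Variables (A : finType) (M : dfa A).
Local Notation S := (dfa_state A M).
Local Notation d := (@dfa_trans A M).
Local Notation F := (@dfa_fin A M).
Local Notation s0 := (@dfa_s A M).

Definition bdr_rules : seq (S * seq (S + A)) :=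
  [seq (p, [::]) | p <- enum {: S} & F p] ++
  [seq (x.1, [:: inr x.2]) | x <- enum {: S * A} & F (d x.1 x.2)] ++
  [seq (x.1, [:: inr x.2.1; inl (d (d x.1 x.2.1) x.2.2); inr x.2.2])
     | x <- enum {: S * (A * A)}].

Definition bdr_grammar : cfg A := @CFG A S s0 bdr_rules.

Local Notation derives := (cfg_derives A bdr_grammar).

Lemma rule_eps p : F p -> (p, [::]) \in bdr_rules.
Proof. by move=> Fp; rewrite mem_cat map_f // mem_filter Fp mem_enum. Qed.

Lemma rule_single p a : F (d p a) -> (p, [:: inr a]) \in bdr_rules.
Proof.
move=> Fpa; rewrite !mem_cat (map_f _ (_ : (p, a) \in _)) ?orbT //.
by rewrite mem_filter Fpa mem_enum.
Qed.

Lemma rule_pair p a b :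
  (p, [:: inr a; inl (d (d p a) b); inr b]) \in bdr_rules.
Proof.
by rewrite !mem_cat (map_f _ (_ : (p, (a, b)) \in _)) ?orbT ?mem_enum.
Qed.

Lemma bdr_rulesP X rhs : (X, rhs) \in bdr_rules ->
  [\/ rhs = [::] /\ F X,
      exists2 a, rhs = [:: inr a] & F (d X a)
    | exists a b, rhs = [:: inr a; inl (d (d X a) b); inr b]].
Proof.
rewrite !mem_cat => /or3P [].
- by case/mapP => p; rewrite mem_filter => /andP [Fp _] [-> ->]; apply: Or31.
- case/mapP => [[p a]]; rewrite mem_filter => /andP [Fp _] [-> ->].
  by apply: Or32; exists a.
- by case/mapP => [[p [a b]]] _ [-> ->]; apply: Or33; exists a, b.
Qed.

Lemma bdr_sound u p : F (foldl d p u) -> derives [:: inl p] (map inr (bdr u)).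
Proof.
have [n] := ubnP (size u); elim: n u p => // n IH [|a [|b u]] p Hsize Hacc.
- exact/derives_rule/rule_eps.
- exact/derives_rule/rule_single.
have Hu : derives [:: inl (d (d p a) b)] (map inr (bdr u)).
  by apply: IH => //; move: Hsize => /=; lia.
apply: derives_trans (derives_rule (G := bdr_grammar) (rule_pair p a b)) _.
by rewrite bdr_cons2 map_cons map_cat; exact: (derives_ctx [:: inr a] [:: inr b] Hu).
Qed.

Definition bdr_form_inv p (s : seq (S + A)) : Prop :=
  (exists2 u, ~~ odd (size u) &
     s = map inr (oddw u) ++ inl (foldl d p u) :: map inr (rev (evenw u))) \/
  (exists2 u, F (foldl d p u) & s = map inr (bdr u)).

Lemma bdr_form_inv_step p s s' :
  bdr_form_inv p s -> cfg_step A bdr_grammar s s' -> bdr_form_inv p s'.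
Proof.
move=> [[u Heven ->] | [u _ ->]] [x [y [X [rhs [Hr [Hs ->]]]]]]; last first.
  by case: (terminal_no_nt Hs).
move: Hr; case/single_nt_decomp: Hs => -> -> ->.
have Hsplit (v : seq A) := oddw_evenw_cat u v; rewrite (negbTE Heven) in Hsplit.
case/bdr_rulesP => [[-> Facc] | [a -> Facc] | [a [b ->]]].
- by right; exists u; rewrite // /bdr map_cat.
- right; exists (u ++ [:: a]); rewrite ?foldl_cat //.
  by rewrite /bdr; have [-> ->] := Hsplit [:: a]; rewrite /= cats0 !map_cat -!catA.
- left; exists (u ++ [:: a; b]); first by rewrite size_cat /= oddD (negbTE Heven).
  have [-> ->] := Hsplit [:: a; b].
  by rewrite foldl_cat /= rev_cat !map_cat -!catA.
Qed.

Lemma bdr_complete w : cfg_lang A bdr_grammar w ->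
  exists2 u, dfa_accept A M u & w = bdr u.
Proof.
move=> /(derives_inv (G := bdr_grammar) (bdr_form_inv s0)) Hinv.
have [] := Hinv (@bdr_form_inv_step s0); first by left; exists [::].
- by case=> u _ /terminal_no_nt.
- by case=> u Hacc E; exists u => //; apply: (inj_map _ E) => ? ? [].
Qed.

End BorderGrammar.

Theorem mainTheorem12 (A : finType) (L : lang A) :
  regular A L -> context_free A (bdr_lang L).
Proof.
move=> [M HM]; exists (bdr_grammar A M) => w; split.
- by case=> u [/HM Hacc ->]; apply: bdr_sound.
- by case/bdr_complete => u /HM Lu ->; exists u.
Qed.
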